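(* Let $(C^\bullet,\mathrm d)$ be a $\mathbb Z$-graded cochain complex of vector spaces and let $L:C^\bullet\to C^{\bullet+s}$ be a linear map of degree $s$ (for some integer $s$) which is a chain map up to sign, i.e. $\mathrm dL=\epsilon L\mathrm d$ for a fixed $\epsilon\in\{1,-1\}$. Then $\ker L$ is a subcomplex, and the following are equivalent: (i) for every $\alpha\in C^\bullet$, $\alpha\in\ker\mathrm d\cap\operatorname{im}L$ if and only if $\alpha\in\operatorname{im}(\mathrm dL)$; (ii) the map $H((\ker L)^\bullet,\mathrm d)\to H(C^\bullet,\mathrm d)$ induced by inclusion is an isomorphism in every degree. *)

From HB Require Import structures.
From mathcomp Require Import all_boot all_order all_algebra.
Set Implicit Arguments. Unset Strict Implicit. Unset Printing Implicit Defensive.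
Import Order.TTheory GRing.Theory Num.Theory.
Local Open Scope ring_scope.

Definition castC (K : fieldType) (C : int -> lmodType K) (m n : int)
  (e : m = n) (x : C m) : C n :=
  eq_rect m (fun k => (C k : Type)) x n e.

Section Complex.
Variables (K : fieldType) (C : int -> lmodType K) (s : int).
Variable d : forall n : int, {linear C n -> C (n + 1)}.
Variable L : forall n : int, {linear C n -> C (n + s)}.

Definition commutes_up_to (eps : K) : Prop :=
  forall (n : int) (x : C n),
    d (n + s) (L n x) = eps *: castC (addrAC n 1 s) (L (n + 1) (d n x)).

Definition kerL_subcomplex : Prop :=
  forall (n : int) (x : C n), L n x = 0 -> L (n + 1) (d n x) = 0.

(* (i), in degree n+s+1 (n ranging over all of Z covers every degree):
   alpha in ker d /\ im L  <->  alpha in im (d L). *)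
Definition cond_i : Prop :=
  forall (n : int) (alpha : C (n + s + 1)),
    (d (n + s + 1) alpha = 0 /\
       exists x : C (n + 1), castC (addrAC n 1 s) (L (n + 1) x) = alpha)
    <-> exists y : C n, d (n + s) (L n y) = alpha.

(* The map H^(n+1)(ker L, d) -> H^(n+1)(C, d) induced by inclusion is injective:
   a cocycle of ker L that is a coboundary in C is a coboundary in ker L. *)
Definition induced_injective : Prop :=
  forall (n : int) (z : C (n + 1)),
    L (n + 1) z = 0 -> d (n + 1) z = 0 ->
    (exists y : C n, d n y = z) ->
    exists y' : C n, L n y' = 0 /\ d n y' = z.

(* ... and surjective: every cocycle of C is cohomologous to a cocycle of ker L. *)
Definition induced_surjective : Prop :=
  forall (n : int) (z : C (n + 1)),
    d (n + 1) z = 0 ->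
    exists z' : C (n + 1), [/\ L (n + 1) z' = 0, d (n + 1) z' = 0 &
      exists y : C n, z - z' = d n y].

Definition cond_ii : Prop := induced_injective /\ induced_surjective.
End Complex.

(* Since eps^2 = 1, the relation d L = eps L d can be solved for L d, so L
   maps cocycles to cocycles, and L d x = 0 exactly when d L x = 0.
   (i) => (ii): for a cocycle z, L z lies in ker d /\ im L, hence L z = d L y,
   and z - eps d y is a cohomologous cocycle of ker L; applied to a preimage
   y of a coboundary z of ker L the same correction gives injectivity.
   (ii) => (i): if d (L x) = 0 then d x is a cocycle of ker L which is a
   coboundary in C, so d x = d y' with L y' = 0; the cocycle x - y' is then
   z' + d y with L z' = 0, and L x = L (d y) = eps d L y. *)
From HB Require Import structures.
From mathcomp Require Import all_boot all_order all_algebra.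
Import Order.TTheory GRing.Theory Num.Theory.
Set Implicit Arguments. Unset Strict Implicit. Unset Printing Implicit Defensive.
Local Open Scope ring_scope.

Section Casts.
Variables (K : fieldType) (C : int -> lmodType K).

Lemma castCK m n (e : m = n) (e' : n = m) (x : C m) : castC e' (castC e x) = x.
Proof. by case: n / e e' => e'; rewrite (eq_axiomK e'). Qed.

Lemma castCZ m n (e : m = n) a (x : C m) : castC e (a *: x) = a *: castC e x.
Proof. by case: n / e. Qed.

Lemma castC0 m n (e : m = n) : castC e (0 : C m) = 0.
Proof. by case: n / e. Qed.

Lemma castC_eq0 m n (e : m = n) (x : C m) : castC e x = 0 -> x = 0.
Proof. by move/(congr1 (castC (esym e))); rewrite castCK castC0. Qed.

Lemma castC_graded (k : int) (f : forall n, {linear C n -> C (n + k)})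
  m n (e : m = n) (x : C m) :
  f n (castC e x) = castC (congr1 (+%R^~ k) e) (f m x).
Proof. by case: n / e. Qed.

End Casts.

Section KernelSubcomplex.
Variables (K : fieldType) (C : int -> lmodType K) (s : int).
Variable d : forall n : int, {linear C n -> C (n + 1)}.
Variable L : forall n : int, {linear C n -> C (n + s)}.
Variable eps : K.
Hypothesis hdd : forall (n : int) (x : C n), d (n + 1) (d n x) = 0.
Hypothesis eps2 : eps * eps = 1.
Hypothesis hdL : commutes_up_to d L eps.

Lemma eps_neq0 : eps != 0.
Proof. by apply: contra_eq_neq eps2 => ->; rewrite mul0r eq_sym oner_neq0. Qed.

Lemma scale_eps_eq0 (V : lmodType K) (v : V) : eps *: v = 0 -> v = 0.
Proof. by move/eqP; rewrite scaler_eq0 (negbTE eps_neq0) => /eqP. Qed.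

Lemma L_d n (x : C n) :
  L (n + 1) (d n x) = castC (esym (addrAC n 1 s)) (eps *: d (n + s) (L n x)).
Proof. by rewrite hdL scalerA eps2 scale1r castCK. Qed.

Lemma kerL_is_subcomplex : kerL_subcomplex d L.
Proof.
move=> n x Lx; have := hdL x; rewrite Lx linear0 => /esym.
by move/scale_eps_eq0/castC_eq0.
Qed.

Lemma d_castL_eq0 n (x : C (n + 1)) :
  d (n + s + 1) (castC (addrAC n 1 s) (L (n + 1) x)) = 0 <->
  L (n + 1 + 1) (d (n + 1) x) = 0.
Proof.
rewrite castC_graded hdL; split=> [/castC_eq0/scale_eps_eq0/castC_eq0 | ->] //.
by rewrite castC0 scaler0 castC0.
Qed.

Lemma kerL_correction n (y : C (n + 1)) (w : C n) :
  castC (addrAC n 1 s) (L (n + 1) y) = d (n + s) (L n w) ->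
  L (n + 1) (y - eps *: d n w) = 0.
Proof.
by move=> hw; rewrite linearB linearZ /= L_d -hw castCZ castCK scalerA eps2
  scale1r subrr.
Qed.

Lemma d_correction n (y : C (n + 1)) (w : C n) :
  d (n + 1) (y - eps *: d n w) = d (n + 1) y.
Proof. by rewrite linearB linearZ /= hdd scaler0 subr0. Qed.

Lemma cond_i_injective : cond_i d L -> induced_injective d L.
Proof.
move=> hi n z Lz dz [y dy]; have [m em] : exists m, n = m + 1.
  by exists (n - 1); rewrite subrK.
subst n; have dLy : d (m + s + 1) (castC (addrAC m 1 s) (L (m + 1) y)) = 0.
  by apply/d_castL_eq0; rewrite dy.
have [w hw] := proj1 (hi m _) (conj dLy (ex_intro _ y erefl)).
exists (y - eps *: d m w).
by split; [exact: kerL_correction | rewrite d_correction].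
Qed.

Lemma cond_i_surjective : cond_i d L -> induced_surjective d L.
Proof.
move=> hi n z dz.
have dLz : d (n + s + 1) (castC (addrAC n 1 s) (L (n + 1) z)) = 0.
  by apply/d_castL_eq0; rewrite dz linear0.
have [y hy] := proj1 (hi n _) (conj dLz (ex_intro _ z erefl)).
exists (z - eps *: d n y); split.
- exact: kerL_correction.
- by rewrite d_correction.
- by exists (eps *: y); rewrite subKr linearZ.
Qed.

Lemma cond_ii_cond_i : cond_ii d L -> cond_i d L.
Proof.
move=> [hinj hsurj] n alpha; split; last first.
  case=> y <-; split; first exact: hdd.
  by exists (eps *: d n y); rewrite linearZ /= castCZ hdL.
case=> [dalpha [x hx]]; subst alpha.
have [y' [Ly' dy']] :=
  hinj _ _ (proj1 (d_castL_eq0 _) dalpha) (hdd _) (ex_intro _ x erefl).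
have dxy' : d (n + 1) (x - y') = 0 by rewrite linearB /= dy' subrr.
have [z' [Lz' _ [y hy]]] := hsurj n (x - y') dxy'.
exists (eps *: y); rewrite !linearZ /= hdL scalerA eps2 scale1r -hy.
by rewrite !linearB /= Ly' Lz' !subr0.
Qed.

End KernelSubcomplex.

Theorem theorem3p25 (K : fieldType) (C : int -> lmodType K)
  (d : forall n : int, {linear C n -> C (n + 1)})
  (hdd : forall (n : int) (x : C n), d (n + 1) (d n x) = 0)
  (s : int) (L : forall n : int, {linear C n -> C (n + s)})
  (eps : K) (heps : eps = 1 \/ eps = -1)
  (hdL : commutes_up_to d L eps) :
  kerL_subcomplex d L /\ (cond_i d L <-> cond_ii d L).
Proof.
have eps2 : eps * eps = 1 by case: heps => ->; rewrite ?mulrNN mulr1.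
split; first exact: (kerL_is_subcomplex eps2 hdL).
split; last exact: (cond_ii_cond_i hdd eps2 hdL).
by move=> hi; split;
  [exact: (cond_i_injective hdd eps2 hdL) | exact: (cond_i_surjective hdd eps2 hdL)].
Qed.
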